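(* Let $\lambda \ge 1.05$ and let $\mathbb{\Lambda}=\{\pm\lambda^n : n\in\mathbb{Z}\}$. The lattice $\mathbb{\Lambda}$ is nondegenerate exactly in the following three cases, and in each case the complete list of triads at unity, i.e. of pairs $(p,q)\in\mathbb{\Lambda}\times\mathbb{\Lambda}$ with $p+q=1$, is as stated: (i) $\lambda=2$; the triads at unity are $(p,q)=(2,-1),\,(-1,2),\,(1/2,1/2)$. (ii) $\lambda=\sigma$, the plastic number; the triads at unity are $(p,q)=(\sigma^3,-\sigma),\,(-\sigma,\sigma^3),\,(\sigma^2,-\sigma^{-1}),\,(-\sigma^{-1},\sigma^2),\,(\sigma^{-3},\sigma^{-2}),\,(\sigma^{-2},\sigma^{-3}),\,(\sigma^5,-\sigma^4),\,(-\sigma^4,\sigma^5),\,(\sigma,-\sigma^{-4}),\,(-\sigma^{-4},\sigma),\,(\sigma^{-5},\sigma^{-1}),\,(\sigma^{-1},\sigma^{-5})$. (iii) $\lambda$ satisfies $1=\lambda^b-\lambda^a$, where $0\le a<b$ are mutually prime integers not larger than $62$, with $(a,b)\neq(1,3)$ and $(a,b)\neq(4,5)$; the triads at unity are $(p,q)=(\lambda^b,-\lambda^a),\,(-\lambda^a,\lambda^b),\,(\lambda^{b-a},-\lambda^{-a}),\,(-\lambda^{-a},\lambda^{b-a}),\,(\lambda^{-b},\lambda^{a-b}),\,(\lambda^{a-b},\lambda^{-b})$.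
   Context: For a real $\lambda>1$, the logarithmic lattice with spacing factor $\lambda$ is $\mathbb{\Lambda}=\{\pm\lambda^n\}_{n\in\mathbb{Z}}\subset\mathbb{R}$. Three points $k,p,q\in\mathbb{\Lambda}$ form a triad if $k=p+q$; then $k$ is said to interact with $p$ and $q$. Call two nodes adjacent if they belong to a common triad; the lattice is nondegenerate if every two nodes are connected through a finite sequence of triads (i.e. the adjacency graph is connected). The plastic number $\sigma=\frac{\sqrt[3]{9+\sqrt{69}}+\sqrt[3]{9-\sqrt{69}}}{\sqrt[3]{18}}\approx 1.325$ is the unique real root of $x^3-x-1=0$ (it also satisfies $\sigma^5-\sigma^4-1=0$). *)

From Stdlib Require Import Reals Lra Lia ZArith Arith List Relations.
Import ListNotations.
Open Scope R_scope.

Definition in_lattice (lam x : R) : Prop :=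
  exists n : Z, x = powerRZ lam n \/ x = - powerRZ lam n.

Definition is_triad (lam k p q : R) : Prop :=
  in_lattice lam k /\ in_lattice lam p /\ in_lattice lam q /\ k = p + q.

Definition adjacent (lam x y : R) : Prop :=
  exists k p q, is_triad lam k p q /\
    (x = k \/ x = p \/ x = q) /\ (y = k \/ y = p \/ y = q).

Definition nondegenerate (lam : R) : Prop :=
  forall x y, in_lattice lam x -> in_lattice lam y ->
    clos_refl_trans R (adjacent lam) x y.

Definition triad_at_unity (lam p q : R) : Prop :=
  in_lattice lam p /\ in_lattice lam q /\ p + q = 1.

Definition plastic : R :=
  (Rpower (9 + sqrt 69) (1/3) + Rpower (9 - sqrt 69) (1/3)) / Rpower 18 (1/3).

Definition triads_plastic (s : R) : list (R * R) :=
  [ (powerRZ s 3, - powerRZ s 1); (- powerRZ s 1, powerRZ s 3);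
    (powerRZ s 2, - powerRZ s (-1)); (- powerRZ s (-1), powerRZ s 2);
    (powerRZ s (-3), powerRZ s (-2)); (powerRZ s (-2), powerRZ s (-3));
    (powerRZ s 5, - powerRZ s 4); (- powerRZ s 4, powerRZ s 5);
    (powerRZ s 1, - powerRZ s (-4)); (- powerRZ s (-4), powerRZ s 1);
    (powerRZ s (-5), powerRZ s (-1)); (powerRZ s (-1), powerRZ s (-5)) ].

Definition triads_ab (lam : R) (a b : Z) : list (R * R) :=
  [ (powerRZ lam b, - powerRZ lam a); (- powerRZ lam a, powerRZ lam b);
    (powerRZ lam (b - a), - powerRZ lam (- a)); (- powerRZ lam (- a), powerRZ lam (b - a));
    (powerRZ lam (- b), powerRZ lam (a - b)); (powerRZ lam (a - b), powerRZ lam (- b)) ].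

Definition case3_pair (a b : nat) : Prop :=
  (a < b)%nat /\ (b <= 62)%nat /\ Nat.gcd a b = 1%nat /\
  (a, b) <> (1%nat, 3%nat) /\ (a, b) <> (4%nat, 5%nat).

Definition case3 (lam : R) : Prop :=
  exists a b : nat, case3_pair a b /\ lam ^ b - lam ^ a = 1.

From Stdlib Require Import Reals Lra Lia ZArith Arith List Bool Relations Classical.
Import ListNotations.
Open Scope R_scope.

(* Dividing an identity lam^t = lam^s + 1 (0 <= s < t) by each of its three
   terms gives the relations 1 = lam^t - lam^s, 1 = lam^(t-s) - lam^(-s) and
   1 = lam^(-t) + lam^(s-t), and every triad at unity arises this way.  Scaling
   a triad at unity by a node shows that the exponents of these "exponent
   pairs" act as shifts along the lattice: a coprime pair connects every node
   to 1 by Bezout, whereas if some d <> 1 divides all their exponents, the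
   nodes +-lam^(dZ) are closed under adjacency.  For lam >= 1.05 every exponent
   pair has t <= 62, and certified interval enclosures of the roots of
   x^t - x^s - 1 show that exponent pairs of a common root have the same gcd
   and that a coprime pair is determined by its root, except that (1, 3) and
   (4, 5) share the plastic number. *)

Definition exponent_pair (lam : R) (s t : nat) : Prop :=
  (s < t)%nat /\ lam ^ t - lam ^ s = 1.

Definition plastic_pair (s t : nat) : Prop :=
  (s, t) = (1%nat, 3%nat) \/ (s, t) = (4%nat, 5%nat).

(** * Triads at unity *)

Lemma triads_ab_at_unity (lam : R) (a b : Z) (p q : R) :
  0 < lam -> powerRZ lam b - powerRZ lam a = 1 ->
  In (p, q) (triads_ab lam a b) -> triad_at_unity lam p q.
Proof.
  intros Hlam Hab Hin.
  assert (Ha : 0 < powerRZ lam a) by (apply powerRZ_lt; exact Hlam).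
  assert (Hb : powerRZ lam b = 1 + powerRZ lam a) by lra.
  unfold triads_ab in Hin; cbn [In] in Hin.
  destruct Hin as [E|[E|[E|[E|[E|[E|[]]]]]]]; injection E as <- <-;
    (split; [|split]);
    try (eexists; solve [left; reflexivity | right; reflexivity]);
    unfold Z.sub; rewrite ?powerRZ_add, ?powerRZ_neg', ?Hb by lra;
    field; lra.
Qed.

Lemma triads_ab_swap (lam : R) (a b : Z) (p q : R) :
  In (p, q) (triads_ab lam a b) -> In (q, p) (triads_ab lam a b).
Proof.
  unfold triads_ab; cbn [In].
  intros [E|[E|[E|[E|[E|[E|[]]]]]]]; injection E as <- <-; tauto.
Qed.

Section IntegerPowers.

Variable lam : R.
Hypothesis lam_gt1 : 1 < lam.

Let lam_neq0 : lam <> 0.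
Proof. lra. Qed.

Lemma powerRZ_gt0 (n : Z) : 0 < powerRZ lam n.
Proof. apply powerRZ_lt; lra. Qed.

Lemma powerRZ_lt_iff (n m : Z) : (n < m)%Z <-> powerRZ lam n < powerRZ lam m.
Proof.
  assert (Hlt : forall n m, (n < m)%Z -> powerRZ lam n < powerRZ lam m).
  { clear n m; intros n m Hnm.
    replace m with (n + Z.of_nat (Z.to_nat (m - n)))%Z by lia.
    rewrite powerRZ_add, <- pow_powerRZ by exact lam_neq0.
    assert (1 < lam ^ Z.to_nat (m - n)) by (apply Rlt_pow_R1; [exact lam_gt1 | lia]).
    pose proof (powerRZ_gt0 n); nra. }
  split; [apply Hlt|].
  intros H; destruct (Z.lt_total n m) as [|[->|Hmn]]; [assumption | lra |].
  apply Hlt in Hmn; lra.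
Qed.

Lemma powerRZ_inj (n m : Z) : powerRZ lam n = powerRZ lam m -> n = m.
Proof.
  intros H; destruct (Z.lt_total n m) as [Hnm|[|Hnm]]; [| assumption |];
    apply powerRZ_lt_iff in Hnm; lra.
Qed.

Lemma in_lattice_neq0 (x : R) : in_lattice lam x -> x <> 0.
Proof. intros [n [-> | ->]]; pose proof (powerRZ_gt0 n); lra. Qed.

Lemma in_lattice_mul (x y : R) :
  in_lattice lam x -> in_lattice lam y -> in_lattice lam (x * y).
Proof.
  intros [n Hx] [m Hy]; exists (n + m)%Z; rewrite powerRZ_add by exact lam_neq0.
  destruct Hx as [-> | ->], Hy as [-> | ->]; [left | right | right | left]; ring.
Qed.

Lemma in_lattice_inv (x : R) : in_lattice lam x -> in_lattice lam (/ x).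
Proof.
  intros [n Hx]; exists (- n)%Z; rewrite powerRZ_neg'.
  pose proof (powerRZ_gt0 n).
  destruct Hx as [-> | ->]; [left | right; field]; lra.
Qed.

Definition listed_triad (p q : R) : Prop :=
  exists s t : nat, exponent_pair lam s t /\
    In (p, q) (triads_ab lam (Z.of_nat s) (Z.of_nat t)).

Lemma listed_triad_swap (p q : R) : listed_triad p q -> listed_triad q p.
Proof.
  intros [s [t [Hst Hin]]]; exists s, t; split; [exact Hst | now apply triads_ab_swap].
Qed.

Lemma listed_triad_of_Z (a b : Z) (p q : R) :
  (0 <= a < b)%Z -> powerRZ lam b - powerRZ lam a = 1 ->
  In (p, q) (triads_ab lam a b) -> listed_triad p q.
Proof.
  intros Hab Heq Hin; exists (Z.to_nat a), (Z.to_nat b).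
  rewrite !Z2Nat.id by lia.
  split; [split; [lia|] | exact Hin].
  rewrite !pow_powerRZ, !Z2Nat.id by lia; exact Heq.
Qed.

Lemma listed_triad_pos_pos (i j : Z) :
  powerRZ lam i + powerRZ lam j = 1 -> (i <= j)%Z ->
  listed_triad (powerRZ lam i) (powerRZ lam j).
Proof.
  intros Hsum Hij.
  assert (Hj : (j < 0)%Z).
  { apply (powerRZ_lt_iff j 0); rewrite powerRZ_O; pose proof (powerRZ_gt0 i); lra. }
  apply (listed_triad_of_Z (j - i) (- i)); [lia | |].
  - unfold Z.sub; rewrite powerRZ_add by exact lam_neq0.
    replace (powerRZ lam j) with (1 - powerRZ lam i) by lra.
    rewrite powerRZ_neg'; field; apply Rgt_not_eq, powerRZ_gt0.
  - unfold triads_ab; cbn [In]; do 4 right; left.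
    replace (- - i)%Z with i by ring; replace (j - i - - i)%Z with j by ring; reflexivity.
Qed.

Lemma listed_triad_pos_neg (i j : Z) :
  powerRZ lam i - powerRZ lam j = 1 -> listed_triad (powerRZ lam i) (- powerRZ lam j).
Proof.
  intros Hdiff.
  assert (Hji : (j < i)%Z) by (apply powerRZ_lt_iff; pose proof (powerRZ_gt0 j); lra).
  assert (Hi : (0 < i)%Z).
  { apply (powerRZ_lt_iff 0 i); rewrite powerRZ_O; pose proof (powerRZ_gt0 j); lra. }
  destruct (Z_lt_le_dec j 0) as [Hj|Hj].
  - apply (listed_triad_of_Z (- j) (i - j)); [lia | |].
    + unfold Z.sub; rewrite powerRZ_add by exact lam_neq0.
      replace (powerRZ lam i) with (1 + powerRZ lam j) by lra.
      rewrite powerRZ_neg'; field; apply Rgt_not_eq, powerRZ_gt0.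
    + unfold triads_ab; cbn [In]; do 2 right; left.
      replace (- - j)%Z with j by ring; replace (i - j - - j)%Z with i by ring; reflexivity.
  - apply (listed_triad_of_Z j i); [lia | exact Hdiff |].
    unfold triads_ab; cbn [In]; left; reflexivity.
Qed.

Lemma triad_at_unity_listed (p q : R) : triad_at_unity lam p q -> listed_triad p q.
Proof.
  intros [[i [-> | ->]] [[j [-> | ->]] Hsum]].
  - destruct (Z_le_gt_dec i j).
    + now apply listed_triad_pos_pos.
    + apply listed_triad_swap, listed_triad_pos_pos; [lra | lia].
  - now apply listed_triad_pos_neg.
  - apply listed_triad_swap, listed_triad_pos_neg; lra.
  - pose proof (powerRZ_gt0 i); pose proof (powerRZ_gt0 j); lra.
Qed.

End IntegerPowers.

(** * Connectivity *)

Section Connectivity.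

Variable lam : R.
Hypothesis lam_gt1 : 1 < lam.

Local Notation linked := (clos_refl_trans R (adjacent lam)).

Lemma linked_sym (x y : R) : linked x y -> linked y x.
Proof.
  induction 1 as [x y [k [p [q [T [Hx Hy]]]]] | | x y z _ IHxy _ IHyz].
  - apply rt_step; exists k, p, q; auto.
  - apply rt_refl.
  - eapply rt_trans; eassumption.
Qed.

Lemma linked_scale (x p q : R) :
  in_lattice lam x -> triad_at_unity lam p q -> linked x (x * p).
Proof.
  intros Hx [Hp [Hq Hpq]]; apply rt_step.
  exists x, (x * p), (x * q); split.
  - repeat split; try apply in_lattice_mul; try assumption.
    rewrite <- Rmult_plus_distr_l, Hpq; ring.
  - split; [left | right; left]; reflexivity.
Qed.

Definition shift_linked (c : Z) : Prop :=
  forall x, in_lattice lam x -> linked x (x * powerRZ lam c).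

Lemma shift_linked_add (c d : Z) :
  shift_linked c -> shift_linked d -> shift_linked (c + d).
Proof.
  intros Hc Hd x Hx; eapply rt_trans; [exact (Hc x Hx)|].
  rewrite powerRZ_add, <- Rmult_assoc by lra.
  apply Hd, in_lattice_mul; [lra | exact Hx | exists c; left; reflexivity].
Qed.

Lemma shift_linked_opp (c : Z) : shift_linked c -> shift_linked (- c).
Proof.
  intros Hc x Hx; apply linked_sym.
  assert (Hy : in_lattice lam (x * powerRZ lam (- c))).
  { apply in_lattice_mul; [lra | exact Hx | exists (- c)%Z; left; reflexivity]. }
  replace x with (x * powerRZ lam (- c) * powerRZ lam c) at 2; [exact (Hc _ Hy)|].
  rewrite Rmult_assoc, <- powerRZ_add, Z.add_opp_diag_l by lra; apply Rmult_1_r.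
Qed.

Lemma shift_linked_mul (k c : Z) : shift_linked c -> shift_linked (k * c).
Proof.
  intros Hc; induction k as [| k IH | k IH] using Z.peano_ind.
  - intros x _; rewrite Z.mul_0_l, powerRZ_O, Rmult_1_r; apply rt_refl.
  - rewrite Z.mul_succ_l; now apply shift_linked_add.
  - rewrite Z.mul_pred_l; now apply shift_linked_add, shift_linked_opp.
Qed.

Lemma shift_linked_of_unity_triad (c : Z) (q : R) :
  triad_at_unity lam (powerRZ lam c) q -> shift_linked c.
Proof. intros T x Hx; exact (linked_scale x _ _ Hx T). Qed.

Lemma nondegenerate_of_shift_linked_one :
  shift_linked 1 -> linked 1 (-1) -> nondegenerate lam.
Proof.
  intros S1 Hsign.
  assert (Hshift : forall x n, in_lattice lam x -> linked x (x * powerRZ lam n))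
    by (intros x n; rewrite <- (Z.mul_1_r n); now apply shift_linked_mul).
  assert (Hone : forall x, in_lattice lam x -> linked 1 x).
  { intros x [n [-> | ->]].
    - rewrite <- (Rmult_1_l (powerRZ lam n)); apply Hshift; exists 0%Z; left; reflexivity.
    - apply (rt_trans _ _ _ (-1)); [exact Hsign|].
      replace (- powerRZ lam n) with (-1 * powerRZ lam n) by ring; apply Hshift.
      exists 0%Z; right; reflexivity. }
  intros x y Hx Hy; apply (rt_trans _ _ _ 1); [apply linked_sym|]; auto.
Qed.

Lemma nondegenerate_of_coprime_pair (a b : nat) :
  exponent_pair lam a b -> Nat.gcd a b = 1%nat -> nondegenerate lam.
Proof.
  intros Hab Hgcd.
  assert (Heq : powerRZ lam (Z.of_nat b) - powerRZ lam (Z.of_nat a) = 1)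
    by (rewrite <- !pow_powerRZ; apply Hab).
  assert (triad : forall p q, In (p, q) (triads_ab lam (Z.of_nat a) (Z.of_nat b)) ->
                   triad_at_unity lam p q)
    by (intros p q; apply triads_ab_at_unity; [lra | exact Heq]).
  assert (Sb : shift_linked (Z.of_nat b))
    by (eapply shift_linked_of_unity_triad, triad; left; reflexivity).
  assert (Sa : shift_linked (Z.of_nat a)).
  { replace (Z.of_nat a) with (Z.of_nat b + - (Z.of_nat b - Z.of_nat a))%Z by ring.
    apply shift_linked_add, shift_linked_opp; [exact Sb|].
    eapply shift_linked_of_unity_triad, triad; do 2 right; left; reflexivity. }
  apply nondegenerate_of_shift_linked_one.
  - destruct (Nat.gcd_bezout a b) as [[u [v Huv]] | [u [v Huv]]]; rewrite Hgcd in Huv.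
    + replace 1%Z with (Z.of_nat u * Z.of_nat a + - Z.of_nat v * Z.of_nat b)%Z by lia.
      apply shift_linked_add; now apply shift_linked_mul.
    + replace 1%Z with (Z.of_nat u * Z.of_nat b + - Z.of_nat v * Z.of_nat a)%Z by lia.
      apply shift_linked_add; now apply shift_linked_mul.
  - assert (L1 : in_lattice lam 1) by (exists 0%Z; left; reflexivity).
    apply (rt_trans _ _ _ (- powerRZ lam (Z.of_nat a))).
    + rewrite <- (Rmult_1_l (- _)); apply (linked_scale 1 _ (powerRZ lam (Z.of_nat b)) L1).
      apply triad; right; left; reflexivity.
    + replace (-1) with (- powerRZ lam (Z.of_nat a) * powerRZ lam (- Z.of_nat a))
        by (rewrite powerRZ_neg'; field; apply Rgt_not_eq, powerRZ_gt0; lra).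
      apply (shift_linked_opp _ Sa); exists (Z.of_nat a); right; reflexivity.
Qed.

End Connectivity.

Section Sublattice.

Variable lam : R.
Hypothesis lam_gt1 : 1 < lam.
Variable d : nat.

Definition sublattice (x : R) : Prop :=
  exists n : Z, (Z.of_nat d | n)%Z /\ (x = powerRZ lam n \/ x = - powerRZ lam n).

Lemma sublattice_mul (x y : R) : sublattice x -> sublattice y -> sublattice (x * y).
Proof.
  intros [n [Dn Hx]] [m [Dm Hy]]; exists (n + m)%Z; split; [now apply Z.divide_add_r|].
  rewrite powerRZ_add by lra.
  destruct Hx as [-> | ->], Hy as [-> | ->]; [left | right | right | left]; ring.
Qed.

Lemma sublattice_inv (x : R) : sublattice x -> sublattice (/ x).
Proof.
  intros [n [Dn Hx]]; exists (- n)%Z; split; [now apply Z.divide_opp_r|].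
  rewrite powerRZ_neg'; pose proof (powerRZ_gt0 lam lam_gt1 n).
  destruct Hx as [-> | ->]; [left | right; field]; lra.
Qed.

Lemma triads_ab_sublattice (a b : Z) (p q : R) :
  (Z.of_nat d | a)%Z -> (Z.of_nat d | b)%Z ->
  In (p, q) (triads_ab lam a b) -> sublattice p /\ sublattice q.
Proof.
  intros Da Db Hin; unfold triads_ab in Hin; cbn [In] in Hin.
  destruct Hin as [E|[E|[E|[E|[E|[E|[]]]]]]]; injection E as <- <-;
    split; eexists; (split; [|solve [left; reflexivity | right; reflexivity]]);
    first [assumption | now apply Z.divide_opp_r | now apply Z.divide_sub_r].
Qed.

Hypothesis divides_exponent_pairs :
  forall s t, exponent_pair lam s t -> Nat.divide d s /\ Nat.divide d t.

Lemma sublattice_triad_ratio (k p q m : R) :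
  is_triad lam k p q -> m = k \/ m = p \/ m = q -> sublattice (m / k).
Proof.
  intros [Lk [Lp [Lq Hk]]] Hm.
  assert (Hk0 : k <> 0) by now apply (in_lattice_neq0 lam).
  assert (Hunity : triad_at_unity lam (p / k) (q / k)).
  { repeat split; try (apply in_lattice_mul; [lra | assumption | now apply in_lattice_inv]).
    unfold Rdiv; rewrite <- Rmult_plus_distr_r, <- Hk; exact (Rinv_r k Hk0). }
  destruct (triad_at_unity_listed lam lam_gt1 _ _ Hunity) as [s [t [Hst Hin]]].
  destruct (divides_exponent_pairs s t Hst) as [Ds Dt].
  assert (Dz : forall n, Nat.divide d n -> (Z.of_nat d | Z.of_nat n)%Z)
    by (intros n [c ->]; exists (Z.of_nat c); lia).
  destruct (triads_ab_sublattice _ _ _ _ (Dz s Ds) (Dz t Dt) Hin) as [Sp Sq].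
  destruct Hm as [-> | [-> | ->]]; [| exact Sp | exact Sq].
  exists 0%Z; split; [apply Z.divide_0_r | left; simpl; field; exact Hk0].
Qed.

Lemma sublattice_adjacent (x y : R) : adjacent lam x y -> sublattice x -> sublattice y.
Proof.
  intros [k [p [q [T [Hx Hy]]]]] Sx.
  assert (Hk0 : k <> 0) by (apply (in_lattice_neq0 lam); [lra | apply T]).
  assert (Hx0 : x <> 0)
    by (apply (in_lattice_neq0 lam); [lra | destruct T as [? [? [? _]]];
        destruct Hx as [-> | [-> | ->]]; assumption]).
  replace y with (x * / (x / k) * (y / k)) by (field; auto).
  apply sublattice_mul; [apply sublattice_mul; [exact Sx|] |];
    [apply sublattice_inv|]; eapply sublattice_triad_ratio; eauto.
Qed.

Lemma sublattice_linked (x y : R) :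
  clos_refl_trans R (adjacent lam) x y -> sublattice x -> sublattice y.
Proof. induction 1; eauto using sublattice_adjacent. Qed.

Lemma degenerate_of_common_divisor : d <> 1%nat -> ~ nondegenerate lam.
Proof.
  intros Hd Hnd.
  assert (S1 : sublattice 1) by (exists 0%Z; split; [apply Z.divide_0_r | left; reflexivity]).
  assert (Hlinked : clos_refl_trans R (adjacent lam) 1 lam)
    by (apply Hnd; [exists 0%Z | exists 1%Z]; left; simpl; ring).
  destruct (sublattice_linked _ _ Hlinked S1) as [n [Dn [E | E]]].
  - assert (n = 1)%Z by (apply (powerRZ_inj lam lam_gt1); rewrite <- E; simpl; ring).
    subst n; apply Z.divide_1_r_nonneg in Dn; lia.
  - pose proof (powerRZ_gt0 lam lam_gt1 n); lra.
Qed.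

End Sublattice.

(** * The trinomials x^t - x^s - 1 *)

Definition trinomial (s t : nat) (x : R) : R := x ^ t - x ^ s - 1.

Lemma exponent_pair_trinomial (lam : R) (s t : nat) :
  exponent_pair lam s t <-> (s < t)%nat /\ trinomial s t lam = 0.
Proof. unfold exponent_pair, trinomial; split; intros [H1 H2]; split; (assumption || lra). Qed.

Lemma trinomial_lt_compat (s t : nat) (x y : R) :
  (s < t)%nat -> 1 <= x -> x < y -> trinomial s t x < trinomial s t y.
Proof.
  intros Hst Hx Hxy; unfold trinomial.
  replace t with (s + S (t - s - 1))%nat by lia; rewrite !pow_add; simpl pow.
  set (k := (t - s - 1)%nat).
  assert (1 <= x ^ k) by (apply pow_R1_Rle; lra).
  assert (x ^ k <= y ^ k) by (apply pow_incr; lra).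
  assert (x ^ s <= y ^ s) by (apply pow_incr; lra).
  assert (1 <= x ^ s) by (apply pow_R1_Rle; lra).
  assert (x * x ^ k < y * y ^ k) by nra.
  assert (x ^ s * (x * x ^ k - 1) < x ^ s * (y * y ^ k - 1)) by nra.
  assert (x ^ s * (y * y ^ k - 1) <= y ^ s * (y * y ^ k - 1))
    by (apply Rmult_le_compat_r; nra).
  nra.
Qed.

Lemma trinomial_le_compat (s t : nat) (x y : R) :
  (s < t)%nat -> 1 <= x -> x <= y -> trinomial s t x <= trinomial s t y.
Proof.
  intros Hst Hx [Hxy | ->]; [left; now apply trinomial_lt_compat | right; reflexivity].
Qed.

Lemma trinomial_antimono_low (s s' t : nat) (x : R) :
  1 <= x -> (s <= s')%nat -> trinomial s' t x <= trinomial s t x.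
Proof. intros Hx Hs; unfold trinomial; pose proof (Rle_pow x s s' Hx Hs); lra. Qed.

Lemma lt_root_of_trinomial_neg (s t : nat) (x r : R) :
  (s < t)%nat -> 1 <= r -> trinomial s t r = 0 -> trinomial s t x < 0 -> x < r.
Proof.
  intros Hst Hr Hroot Hx; apply Rnot_le_lt; intros Hrx.
  pose proof (trinomial_le_compat s t r x Hst Hr Hrx); lra.
Qed.

Lemma root_lt_of_trinomial_pos (s t : nat) (x r : R) :
  (s < t)%nat -> 1 <= x -> trinomial s t r = 0 -> 0 < trinomial s t x -> r < x.
Proof.
  intros Hst Hx Hroot Hpos; apply Rnot_le_lt; intros Hxr.
  pose proof (trinomial_le_compat s t x r Hst Hx Hxr); lra.
Qed.

Lemma exponent_pair_root_unique (s t : nat) (x y : R) :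
  1 <= x -> 1 <= y -> exponent_pair x s t -> exponent_pair y s t -> x = y.
Proof.
  rewrite !exponent_pair_trinomial; intros Hx Hy [Hst Ex] [_ Ey].
  destruct (Rtotal_order x y) as [Hxy | [Hxy | Hxy]]; [| exact Hxy |].
  - pose proof (trinomial_lt_compat s t x y Hst Hx Hxy); lra.
  - pose proof (trinomial_lt_compat s t y x Hst Hy Hxy); lra.
Qed.

Lemma exponent_pair_bound (lam : R) (s t : nat) :
  21 / 20 <= lam -> exponent_pair lam s t -> (t <= 62)%nat.
Proof.
  intros Hlam [Hst Heq]; apply Nat.nlt_ge; intros Ht.
  assert (Hbig : 20 < (21 / 20) ^ 62).
  { apply (Rmult_lt_reg_r (20 ^ 62)); [apply pow_lt; lra|].
    rewrite <- Rpow_mult_distr; replace (21 / 20 * 20) with 21 by field.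
    change 21 with (IZR 21); change 20 with (IZR 20).
    rewrite !pow_IZR, <- mult_IZR; apply IZR_lt; reflexivity. }
  assert (lam ^ s <= lam ^ (t - 1)) by (apply Rle_pow; [lra | lia]).
  assert ((21 / 20) ^ 62 <= lam ^ (t - 1)).
  { apply (Rle_trans _ (lam ^ 62)); [apply pow_incr; lra | apply Rle_pow; [lra | lia]]. }
  replace t with (S (t - 1)) in Heq by lia; simpl in Heq; nra.
Qed.

(** * Certified enclosures of the roots *)

Lemma IZR_floor_div (a b : Z) :
  (0 < b)%Z -> IZR (a / b) <= IZR a / IZR b < IZR (a / b) + 1.
Proof.
  intros Hb.
  assert (Hb' : 0 < IZR b) by now apply IZR_lt.
  pose proof (Z.mul_div_le a b Hb) as Hle.
  pose proof (Z.mul_succ_div_gt a b Hb) as Hgt.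
  apply IZR_le in Hle; apply IZR_lt in Hgt.
  rewrite mult_IZR in Hle, Hgt; rewrite succ_IZR in Hgt.
  split; [apply Rmult_le_reg_l with (IZR b) | apply Rmult_lt_reg_l with (IZR b)];
    try exact Hb'; unfold Rdiv; rewrite <- Rmult_assoc, (Rmult_comm _ (IZR a)),
    Rmult_assoc, Rinv_r, Rmult_1_r by lra; lra.
Qed.

Definition prec : Z := 24.
Definition den : Z := 2 ^ prec.
Definition den2 : Z := den * den.

Definition dyadic (x : Z) : R := IZR x / IZR den.

Lemma den_gt0 : (0 < den)%Z.
Proof. reflexivity. Qed.

Lemma dyadic_ge1 (x : Z) : (den <= x)%Z -> 1 <= dyadic x.
Proof.
  intros Hx; unfold dyadic; apply IZR_le in Hx.
  pose proof (IZR_lt _ _ den_gt0).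
  apply (Rmult_le_reg_r (IZR den)); [lra|]; field_simplify; lra.
Qed.

Lemma dyadic_lt_inv (x y : Z) : dyadic x < dyadic y -> (x < y)%Z.
Proof.
  unfold dyadic; intros H; apply lt_IZR.
  pose proof (IZR_lt _ _ den_gt0).
  apply (Rmult_lt_compat_r (IZR den)) in H; [|lra]; field_simplify in H; lra.
Qed.

Lemma dyadic_nonneg (x : Z) : (0 <= x)%Z -> 0 <= dyadic x.
Proof.
  intros Hx; unfold dyadic, Rdiv; apply Rmult_le_pos; [now apply IZR_le|].
  left; apply Rinv_0_lt_compat, IZR_lt, den_gt0.
Qed.

(* Powers are kept as integers scaled by [den2]; each step multiplies by
   [dyadic x] and rounds down, resp. up. *)
Fixpoint pow_lo (x : Z) (n : nat) : Z :=
  match n with O => den2 | S n => Z.shiftr (x * pow_lo x n) prec end.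

Fixpoint pow_hi (x : Z) (n : nat) : Z :=
  match n with O => den2 | S n => (Z.shiftr (x * pow_hi x n) prec + 1)%Z end.

Lemma pow_lo_le (x : Z) (n : nat) : (0 <= x)%Z -> IZR (pow_lo x n) <= IZR den2 * dyadic x ^ n.
Proof.
  intros Hx; pose proof (dyadic_nonneg x Hx).
  induction n as [| n IH]; [simpl; lra|].
  cbn [pow_lo pow]; rewrite Z.shiftr_div_pow2 by easy.
  apply (Rle_trans _ (IZR (x * pow_lo x n) / IZR den)); [apply IZR_floor_div, den_gt0|].
  rewrite mult_IZR; unfold dyadic in *.
  replace (IZR x * IZR (pow_lo x n) / IZR den) with (IZR x / IZR den * IZR (pow_lo x n))
    by (field; apply Rgt_not_eq, IZR_lt, den_gt0).
  rewrite (Rmult_comm (IZR den2)), Rmult_assoc; apply Rmult_le_compat_l; lra.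
Qed.

Lemma pow_hi_ge (x : Z) (n : nat) : (0 <= x)%Z -> IZR den2 * dyadic x ^ n <= IZR (pow_hi x n).
Proof.
  intros Hx; pose proof (dyadic_nonneg x Hx).
  induction n as [| n IH]; [simpl; lra|].
  cbn [pow_hi pow]; rewrite Z.shiftr_div_pow2, plus_IZR by easy.
  apply (Rle_trans _ (IZR (x * pow_hi x n) / IZR den));
    [| left; apply IZR_floor_div, den_gt0].
  rewrite mult_IZR; unfold dyadic in *.
  replace (IZR x * IZR (pow_hi x n) / IZR den) with (IZR x / IZR den * IZR (pow_hi x n))
    by (field; apply Rgt_not_eq, IZR_lt, den_gt0).
  rewrite (Rmult_comm (IZR den2)), Rmult_assoc; apply Rmult_le_compat_l; lra.
Qed.

Definition below_root (x : Z) (s t : nat) : bool := (pow_hi x t - pow_lo x s - den2 <? 0)%Z.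

Definition above_root (x : Z) (s t : nat) : bool := (0 <? pow_lo x t - pow_hi x s - den2)%Z.

Lemma below_root_sound (x : Z) (s t : nat) :
  (0 <= x)%Z -> below_root x s t = true -> trinomial s t (dyadic x) < 0.
Proof.
  intros Hx H; apply Z.ltb_lt, IZR_lt in H; rewrite !minus_IZR in H.
  pose proof (pow_hi_ge x t Hx); pose proof (pow_lo_le x s Hx).
  assert (0 < IZR den2) by (apply IZR_lt; reflexivity).
  unfold trinomial; apply (Rmult_lt_reg_l (IZR den2)); lra.
Qed.

Lemma above_root_sound (x : Z) (s t : nat) :
  (0 <= x)%Z -> above_root x s t = true -> 0 < trinomial s t (dyadic x).
Proof.
  intros Hx H; apply Z.ltb_lt, IZR_lt in H; rewrite !minus_IZR in H.
  pose proof (pow_lo_le x t Hx); pose proof (pow_hi_ge x s Hx).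
  assert (0 < IZR den2) by (apply IZR_lt; reflexivity).
  unfold trinomial; apply (Rmult_lt_reg_l (IZR den2)); lra.
Qed.

Definition lo0 : Z := (21 * den / 20)%Z.

Lemma dyadic_lo0 : 1 <= dyadic lo0 <= 21 / 20.
Proof.
  split; [apply dyadic_ge1, Z.leb_le; reflexivity|].
  assert (H : (20 * lo0 <= 21 * den)%Z) by (apply Z.leb_le; reflexivity).
  apply IZR_le in H; rewrite !mult_IZR in H.
  pose proof (IZR_lt _ _ den_gt0); unfold dyadic.
  apply (Rmult_le_reg_r (IZR den)); [lra|]; field_simplify; lra.
Qed.

(* The root of [trinomial s t] increases with [s], so only [s >= threshold t]
   can give a root above 21/20: [threshold t] is one more than the largest
   [s < t] whose root is certified to lie below [dyadic lo0], or 0. *)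
Fixpoint threshold_from (t k : nat) : nat :=
  match k with
  | O => O
  | S k => if above_root lo0 k t then S k else threshold_from t k
  end.

Definition threshold (t : nat) : nat := threshold_from t t.

Lemma threshold_from_spec (t k : nat) :
  threshold_from t k = O \/ exists j, threshold_from t k = S j /\ above_root lo0 j t = true.
Proof.
  induction k as [| k IH]; [left; reflexivity|]; cbn [threshold_from].
  destruct (above_root lo0 k t) eqn:E; [right; exists k; auto | exact IH].
Qed.

Definition candidates : list (nat * nat) :=
  flat_map (fun t => map (fun s => (s, t)) (seq (threshold t) (t - threshold t))) (seq 1 62).

Lemma exponent_pair_candidate (lam : R) (s t : nat) :
  21 / 20 <= lam -> exponent_pair lam s t -> In (s, t) candidates.
Proof.
  intros Hlam Hst.
  pose proof (exponent_pair_bound lam s t Hlam Hst) as Ht.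
  apply exponent_pair_trinomial in Hst as [Hst Hroot].
  assert (Hs : (threshold t <= s)%nat).
  { destruct (threshold_from_spec t t) as [H | [j [H Hj]]]; unfold threshold; rewrite H; [lia|].
    apply Nat.nlt_ge; intros Hsj.
    pose proof dyadic_lo0 as Hlo0.
    apply above_root_sound in Hj; [| apply Z.leb_le; reflexivity].
    pose proof (trinomial_antimono_low s j t (dyadic lo0) ltac:(lra) ltac:(lia)).
    assert (lam < dyadic lo0)
      by (apply (root_lt_of_trinomial_pos s t); [exact Hst | lra | exact Hroot | lra]).
    lra. }
  apply in_flat_map; exists t; split; [apply in_seq; lia|].
  apply in_map_iff; exists s; split; [reflexivity | apply in_seq; lia].
Qed.

(* Bisection is only a heuristic: its output is checked by [enclosure_ok].  The
   final widening keeps dyadic roots, such as 2, strictly inside. *)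
Fixpoint bisect (fuel s t : nat) (lo hi : Z) : Z * Z :=
  match fuel with
  | O => ((lo - 1)%Z, (hi + 1)%Z)
  | S fuel =>
      let m := Z.shiftr (lo + hi) 1 in
      if (pow_lo m t - pow_lo m s <? den2)%Z then bisect fuel s t m hi else bisect fuel s t lo m
  end.

Definition enclosure (p : nat * nat) : Z * Z := bisect 22 (fst p) (snd p) lo0 (2 * den + 1).

(* Evaluated once here, so that the kernel only re-checks the enclosures, not
   their search. *)
Definition enclosures : list ((nat * nat) * (Z * Z)) :=
  Eval vm_compute in map (fun p => (p, enclosure p)) candidates.

Definition enclosure_ok (p : nat * nat) (e : Z * Z) : bool :=
  (den <=? fst e)%Z && (den <=? snd e)%Z &&
  below_root (fst e) (fst p) (snd p) && above_root (snd e) (fst p) (snd p).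

Lemma enclosure_ok_sound (lam : R) (s t : nat) (lo hi : Z) :
  1 <= lam -> exponent_pair lam s t -> enclosure_ok (s, t) (lo, hi) = true ->
  dyadic lo < lam < dyadic hi.
Proof.
  intros Hlam Hst Hok; apply exponent_pair_trinomial in Hst as [Hst Hroot].
  unfold enclosure_ok in Hok; cbn [fst snd] in Hok.
  apply andb_true_iff in Hok as [Hok Habove]; apply andb_true_iff in Hok as [Hok Hbelow].
  apply andb_true_iff in Hok as [Hlo Hhi]; apply Z.leb_le in Hlo, Hhi.
  pose proof den_gt0.
  apply below_root_sound in Hbelow; [| lia]; apply above_root_sound in Habove; [| lia].
  split; [now apply (lt_root_of_trinomial_neg s t) |].
  apply (root_lt_of_trinomial_pos s t); auto using dyadic_ge1.
Qed.

Definition overlap (e e' : Z * Z) : bool := (fst e <? snd e')%Z && (fst e' <? snd e)%Z.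

Definition plastic_pairb (s t : nat) : bool := (s =? 1) && (t =? 3) || (s =? 4) && (t =? 5).

Definition same_class (p p' : nat * nat) : bool :=
  let (s, t) := p in
  let (s', t') := p' in
  (Nat.gcd s t =? Nat.gcd s' t') &&
  (negb (Nat.gcd s t =? 1) || (s =? s') && (t =? t') || plastic_pairb s t && plastic_pairb s' t').

Definition separated (cert : list ((nat * nat) * (Z * Z))) : bool :=
  forallb (fun c => enclosure_ok (fst c) (snd c)) cert &&
  forallb (fun c => forallb (fun c' =>
    if overlap (snd c) (snd c') then same_class (fst c) (fst c') else true) cert) cert.

Lemma separated_spec (cert : list ((nat * nat) * (Z * Z))) :
  separated cert = true ->
  (forall p e, In (p, e) cert -> enclosure_ok p e = true) /\
  (forall p e p' e', In (p, e) cert -> In (p', e') cert ->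
     overlap e e' = true -> same_class p p' = true).
Proof.
  unfold separated; intros H.
  apply andb_true_iff in H as [Hok Hsep]; rewrite forallb_forall in Hok, Hsep.
  split; [intros p e Hin; exact (Hok _ Hin)|].
  intros p e p' e' Hin Hin' Hov.
  specialize (Hsep _ Hin); rewrite forallb_forall in Hsep.
  specialize (Hsep _ Hin'); cbn [fst snd] in Hsep; rewrite Hov in Hsep; exact Hsep.
Qed.

Lemma enclosures_keys : map fst enclosures = candidates.
Proof. vm_compute; reflexivity. Qed.

Lemma enclosures_separated : separated enclosures = true.
Proof. vm_compute; reflexivity. Qed.

Lemma enclosure_of_candidate (p : nat * nat) :
  In p candidates -> exists e, In (p, e) enclosures.
Proof.
  rewrite <- enclosures_keys; intros Hp.
  apply in_map_iff in Hp as [[p' e] [<- Hin]]; now exists e.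
Qed.

Lemma plastic_pairb_spec (s t : nat) : plastic_pairb s t = true -> plastic_pair s t.
Proof.
  unfold plastic_pairb, plastic_pair; intros H.
  apply orb_true_iff in H as [H | H]; apply andb_true_iff in H as [Hs Ht];
    apply Nat.eqb_eq in Hs, Ht; subst; auto.
Qed.

Lemma same_class_spec (s t s' t' : nat) :
  same_class (s, t) (s', t') = true ->
  Nat.gcd s t = Nat.gcd s' t' /\
  (Nat.gcd s t = 1%nat -> (s, t) = (s', t') \/ plastic_pair s t /\ plastic_pair s' t').
Proof.
  unfold same_class; intros H.
  apply andb_true_iff in H as [Hgcd H]; apply Nat.eqb_eq in Hgcd.
  split; [exact Hgcd|]; intros H1; rewrite H1 in H; cbn [Nat.eqb negb orb] in H.
  apply orb_true_iff in H as [H | H]; apply andb_true_iff in H as [Hs Ht].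
  - apply Nat.eqb_eq in Hs, Ht; left; congruence.
  - right; split; now apply plastic_pairb_spec.
Qed.

Lemma exponent_pairs_same_class (lam : R) (s t s' t' : nat) :
  21 / 20 <= lam -> exponent_pair lam s t -> exponent_pair lam s' t' ->
  Nat.gcd s t = Nat.gcd s' t' /\
  (Nat.gcd s t = 1%nat -> (s, t) = (s', t') \/ plastic_pair s t /\ plastic_pair s' t').
Proof.
  intros Hlam Hst Hst'.
  destruct (separated_spec _ enclosures_separated) as [Hok Hclass].
  destruct (enclosure_of_candidate _ (exponent_pair_candidate lam s t Hlam Hst))
    as [[lo hi] Hin].
  destruct (enclosure_of_candidate _ (exponent_pair_candidate lam s' t' Hlam Hst'))
    as [[lo' hi'] Hin'].
  pose proof (enclosure_ok_sound lam s t lo hi ltac:(lra) Hst (Hok _ _ Hin)).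
  pose proof (enclosure_ok_sound lam s' t' lo' hi' ltac:(lra) Hst' (Hok _ _ Hin')).
  apply same_class_spec, (Hclass _ _ _ _ Hin Hin'); unfold overlap; cbn [fst snd].
  apply andb_true_iff; split; apply Z.ltb_lt, dyadic_lt_inv; lra.
Qed.

(** * The plastic number *)

Lemma Rpower_third_cube (x : R) : 0 < x -> Rpower x (1 / 3) ^ 3 = x.
Proof.
  intros Hx; rewrite <- Rpower_pow by apply exp_pos.
  rewrite Rpower_mult; replace (1 / 3 * INR 3) with 1 by (simpl; field).
  now apply Rpower_1.
Qed.

(* Cardano: u = (9 + sqrt 69)^(1/3), v = (9 - sqrt 69)^(1/3) and c = 18^(1/3)
   satisfy u v c = 6, hence (u + v)^3 = 18 + 3 u v (u + v) = c^3 (1 + (u + v) / c). *)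
Lemma plastic_cubic : plastic ^ 3 = plastic + 1.
Proof.
  assert (Q0 : 0 <= sqrt 69) by apply sqrt_pos.
  assert (Q1 : sqrt 69 * sqrt 69 = 69) by (apply sqrt_sqrt; lra).
  assert (Q2 : sqrt 69 < 9) by nra.
  set (A := 9 + sqrt 69); set (B := 9 - sqrt 69).
  assert (HA : 0 < A) by (unfold A; lra); assert (HB : 0 < B) by (unfold B; lra).
  set (u := Rpower A (1 / 3)); set (v := Rpower B (1 / 3)); set (c := Rpower 18 (1 / 3)).
  assert (Hc : 0 < c) by apply exp_pos.
  assert (U3 : u ^ 3 = A) by now apply Rpower_third_cube.
  assert (V3 : v ^ 3 = B) by now apply Rpower_third_cube.
  assert (C3 : c ^ 3 = 18) by (apply Rpower_third_cube; lra).
  assert (Huvc : u * v * c = 6).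
  { unfold u, v, c; rewrite !Rpower_mult_distr by nra.
    replace (A * B * 18) with (6 ^ 3) by (unfold A, B; nra).
    rewrite <- Rpower_pow, Rpower_mult by lra.
    replace (INR 3 * (1 / 3)) with 1 by (simpl; field); apply Rpower_1; lra. }
  unfold plastic; fold A B u v c; unfold Rdiv.
  rewrite Rpow_mult_distr, pow_inv, C3.
  replace ((u + v) ^ 3) with (u ^ 3 + v ^ 3 + 3 * (u * v) * (u + v)) by ring.
  rewrite U3, V3.
  replace (u * v) with (u * v * c / c) by (field; lra); rewrite Huvc.
  unfold A, B; field; lra.
Qed.

Lemma plastic_gt : 5 / 4 < plastic.
Proof.
  assert (Hpos : 0 < plastic).
  { unfold plastic, Rdiv; apply Rmult_lt_0_compat;
      [apply Rplus_lt_0_compat | apply Rinv_0_lt_compat]; apply exp_pos. }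
  pose proof plastic_cubic; apply Rnot_le_lt; intros Hle; simpl in *; nra.
Qed.

Lemma plastic_exponent_pairs : exponent_pair plastic 1 3 /\ exponent_pair plastic 4 5.
Proof.
  pose proof plastic_cubic.
  split; split; [lia | simpl in *; lra | lia |].
  replace (plastic ^ 5 - plastic ^ 4)
    with (1 + (plastic ^ 3 - plastic - 1) * (plastic ^ 2 - plastic + 1)) by ring.
  rewrite H; ring.
Qed.

Lemma plastic_pair_root (lam : R) (s t : nat) :
  1 <= lam -> plastic_pair s t -> exponent_pair lam s t -> lam = plastic.
Proof.
  intros Hlam Hst Hpair; destruct plastic_exponent_pairs as [P13 P45].
  pose proof plastic_gt.
  destruct Hst as [E | E]; injection E as -> ->;
    eapply exponent_pair_root_unique; eauto; lra.
Qed.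

Lemma triads_ab_listed (lam : R) (s t : nat) (p q : R) :
  0 < lam -> exponent_pair lam s t ->
  In (p, q) (triads_ab lam (Z.of_nat s) (Z.of_nat t)) -> triad_at_unity lam p q.
Proof.
  intros Hlam [_ Heq]; apply triads_ab_at_unity; [exact Hlam|].
  rewrite <- !pow_powerRZ; exact Heq.
Qed.

Lemma coprime_pair_iff (lam : R) : 21 / 20 <= lam ->
  (exists s t, exponent_pair lam s t /\ Nat.gcd s t = 1%nat) <->
  lam = 2 \/ lam = plastic \/ case3 lam.
Proof.
  intros Hlam; split.
  - intros [s [t [Hst Hgcd]]].
    destruct (classic (plastic_pair s t)) as [Hpl | Hpl].
    + right; left; eapply plastic_pair_root; eauto; lra.
    + do 2 right; exists s, t; split; [| apply Hst].
      split; [apply Hst|]; split; [exact (exponent_pair_bound lam s t Hlam Hst)|].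
      split; [exact Hgcd|]; split; intros E; apply Hpl; [left | right]; exact E.
  - intros [-> | [-> | [a [b [[Hab [_ [Hgcd _]]] Heq]]]]].
    + exists 0%nat, 1%nat; split; [split; [lia | simpl; lra] | reflexivity].
    + exists 1%nat, 3%nat; split; [apply plastic_exponent_pairs | reflexivity].
    + exists a, b; repeat split; assumption.
Qed.

Lemma nondegenerate_iff_coprime_pair (lam : R) : 21 / 20 <= lam ->
  nondegenerate lam <-> exists s t, exponent_pair lam s t /\ Nat.gcd s t = 1%nat.
Proof.
  intros Hlam; split.
  - intros Hnd; apply NNPP; intros Hnone.
    destruct (classic (exists s t, exponent_pair lam s t)) as [[s [t Hst]] | Hno].
    + apply (degenerate_of_common_divisor lam ltac:(lra) (Nat.gcd s t)); [| | exact Hnd].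
      * intros s' t' Hst'.
        rewrite (proj1 (exponent_pairs_same_class lam s t s' t' Hlam Hst Hst')).
        split; [apply Nat.gcd_divide_l | apply Nat.gcd_divide_r].
      * intros Hgcd; apply Hnone; exists s, t; auto.
    + apply (degenerate_of_common_divisor lam ltac:(lra) 0); [| discriminate | exact Hnd].
      intros s t Hst; exfalso; apply Hno; exists s, t; exact Hst.
  - intros [s [t [Hst Hgcd]]]; apply (nondegenerate_of_coprime_pair lam ltac:(lra) s t); auto.
Qed.

Lemma unity_triads_of_coprime_pair (lam : R) (a b : nat) (p q : R) :
  21 / 20 <= lam -> exponent_pair lam a b -> Nat.gcd a b = 1%nat -> ~ plastic_pair a b ->
  triad_at_unity lam p q <-> In (p, q) (triads_ab lam (Z.of_nat a) (Z.of_nat b)).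
Proof.
  intros Hlam Hab Hgcd Hpl; split; [| apply triads_ab_listed; [lra | exact Hab]].
  intros Hpq; destruct (triad_at_unity_listed lam ltac:(lra) p q Hpq) as [s [t [Hst Hin]]].
  destruct (exponent_pairs_same_class lam a b s t Hlam Hab Hst) as [Hg Hclass].
  destruct (Hclass Hgcd) as [E | [Hpl_ab _]]; [| contradiction].
  injection E as -> ->; exact Hin.
Qed.

Lemma two_unity_triads (p q : R) :
  triad_at_unity 2 p q <-> In (p, q) [(2, -1); (-1, 2); (1 / 2, 1 / 2)].
Proof.
  assert (H01 : exponent_pair 2 0 1) by (split; [lia | simpl; lra]).
  assert (Hpl : ~ plastic_pair 0 1) by (intros [E | E]; discriminate).
  rewrite (unity_triads_of_coprime_pair 2 0 1 p q ltac:(lra) H01 eq_refl Hpl).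
  replace (triads_ab 2 (Z.of_nat 0) (Z.of_nat 1))
    with [(2, -1); (-1, 2); (2, -1); (-1, 2); (1 / 2, 1 / 2); (1 / 2, 1 / 2)]
    by (unfold triads_ab; simpl; repeat f_equal; field).
  simpl; tauto.
Qed.

Lemma plastic_unity_triads (p q : R) :
  triad_at_unity plastic p q <-> In (p, q) (triads_plastic plastic).
Proof.
  pose proof plastic_gt; destruct plastic_exponent_pairs as [P13 P45].
  change (triads_plastic plastic) with
    (triads_ab plastic (Z.of_nat 1) (Z.of_nat 3) ++ triads_ab plastic (Z.of_nat 4) (Z.of_nat 5)).
  rewrite in_app_iff; split.
  - intros Hpq; destruct (triad_at_unity_listed plastic ltac:(lra) p q Hpq) as [s [t [Hst Hin]]].
    destruct (exponent_pairs_same_class plastic s t 1 3 ltac:(lra) Hst P13) as [Hg Hclass].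
    destruct (Hclass Hg) as [E | [[E | E] _]]; injection E as -> ->; auto.
  - intros [Hin | Hin];
      [apply (triads_ab_listed plastic 1 3) | apply (triads_ab_listed plastic 4 5)];
      auto; lra.
Qed.

Theorem theorem1 (lam : R) (hlam : 105 / 100 <= lam) :
  (nondegenerate lam <-> (lam = 2 \/ lam = plastic \/ case3 lam)) /\
  (lam = 2 -> forall p q, triad_at_unity lam p q <->
      In (p, q) [ (2, -1); (-1, 2); (1/2, 1/2) ]) /\
  (lam = plastic -> forall p q, triad_at_unity lam p q <->
      In (p, q) (triads_plastic plastic)) /\
  (forall a b : nat, case3_pair a b -> lam ^ b - lam ^ a = 1 ->
     forall p q, triad_at_unity lam p q <->
       In (p, q) (triads_ab lam (Z.of_nat a) (Z.of_nat b))).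
Proof.
  assert (Hlam : 21 / 20 <= lam) by lra.
  split; [| split; [| split]].
  - rewrite nondegenerate_iff_coprime_pair by exact Hlam; exact (coprime_pair_iff lam Hlam).
  - intros ->; exact two_unity_triads.
  - intros ->; exact plastic_unity_triads.
  - intros a b [Hab [_ [Hgcd [H13 H45]]]] Heq p q.
    apply unity_triads_of_coprime_pair; [exact Hlam | split; assumption | exact Hgcd |].
    intros [E | E]; contradiction.
Qed.
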